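(* Let $\mathcal{T}=(X,A,Z,(f_n))$ be a mapping tuple, fix a compatible metric on $Z$, let $d\in\omega$ and $(u,(V_x)_{x\in X})\in U_{\mathcal{T}}$. Then there is a family $(W_x)_{x\in X}$ of subsets of $Z$ such that (a) $(u,(W_x)_{x\in X})\in E_{\mathcal{T}}$; (b) for each $x\in X$, $W_x\subseteq V_x$, $W_x$ is clopen and $\mathrm{diam}(W_x)\le 2^{-d}$; (c) $W_x\cap W_y=\emptyset$ for $x\ne y$ in $X$.
   Context: An oriented graph on $X$ is an irreflexive $A\subseteq X^2$ with $A\cap A^{-1}=\emptyset$; $s(A)=A\cup A^{-1}$; $\mathrm{Succ}(x)=\{y:(x,y)\in A\}$. $A$ is an uogas if it is an oriented graph, $|\mathrm{Succ}(x)|\le1$ for all $x$, and $s(A)$ is acyclic (no injective $s(A)$-path $(x_i)_{i\le n}$, $n\ge2$, with $(x_n,x_0)\in s(A)$). A strongly complex situation is $(Z,(f_n)_{n\in\omega})$ with $Z$ a nonempty zero-dimensional perfect Polish space, each $f_n$ a partial continuous open map on $Z$ with clopen domain $D_n$ and clopen range, $\Delta(Z)\subseteq\overline{\bigcup_n\mathrm{Graph}(f_n)}\setminus\bigcup_n\mathrm{Graph}(f_n)$, and the restriction of any $f_n$ to any nonempty open subset of $D_n$ not countable-to-one. A mapping tuple is $\mathcal{T}=(X,A,Z,(f_n))$ with $A$ an uogas on a finite set $X$ and $(Z,(f_n))$ a strongly complex situation. $E_{\mathcal{T}}$ (resp. $U_{\mathcal{T}}$) is the set of pairs $(u,(V_x)_{x\in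 X})$ with $u\in\omega^X$ and each $V_x$ a nonempty open subset of $Z$ such that for all $(x,y)\in A$: $V_x\subseteq D_{u(x)}$ and $V_y=f_{u(x)}[V_x]$ (resp. $V_y\subseteq f_{u(x)}[V_x]$). *)

From Stdlib Require Import Reals List.
Open Scope R_scope.

Section Topology.
Variable Z : Type.
Variable dist : Z -> Z -> R.

Definition is_metric : Prop :=
  (forall x y, 0 <= dist x y) /\ (forall x y, dist x y = 0 <-> x = y) /\
  (forall x y, dist x y = dist y x) /\
  (forall x y z, dist x z <= dist x y + dist y z).

Definition open_set (U : Z -> Prop) : Prop :=
  forall x, U x -> exists eps, 0 < eps /\ forall y, dist x y < eps -> U y.

Definition clopen (U : Z -> Prop) : Prop :=
  open_set U /\ open_set (fun z => ~ U z).

Definition subset (U V : Z -> Prop) : Prop := forall z, U z -> V z.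

Definition nonempty (U : Z -> Prop) : Prop := exists z, U z.

Definition diam_le (W : Z -> Prop) (r : R) : Prop :=
  forall a b, W a -> W b -> dist a b <= r.

Definition cauchy_seq (s : nat -> Z) : Prop :=
  forall eps, 0 < eps -> exists N, forall m n, (N <= m)%nat -> (N <= n)%nat ->
    dist (s m) (s n) < eps.

Definition converges (s : nat -> Z) (l : Z) : Prop :=
  forall eps, 0 < eps -> exists N, forall n, (N <= n)%nat -> dist (s n) l < eps.

Definition complete_metric : Prop :=
  forall s, cauchy_seq s -> exists l, converges s l.

Definition separable : Prop :=
  exists s : nat -> Z, forall x eps, 0 < eps -> exists n, dist x (s n) < eps.

Definition countable_set (S : Z -> Prop) : Prop :=
  exists h : Z -> nat, forall a b, S a -> S b -> h a = h b -> a = b.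

End Topology.

Arguments is_metric {Z}. Arguments open_set {Z}. Arguments clopen {Z}.
Arguments subset {Z}. Arguments nonempty {Z}. Arguments diam_le {Z}.
Arguments complete_metric {Z}. Arguments separable {Z}.
Arguments countable_set {Z}.

Definition same_topology {Z : Type} (d1 d2 : Z -> Z -> R) : Prop :=
  forall U, open_set d1 U <-> open_set d2 U.

(* (Z, topology of dist) is Polish and dist is a compatible metric. *)
Definition polish {Z : Type} (dist : Z -> Z -> R) : Prop :=
  is_metric dist /\ separable dist /\
  exists d', is_metric d' /\ same_topology dist d' /\ complete_metric d'.

Definition zero_dimensional {Z : Type} (dist : Z -> Z -> R) : Prop :=
  forall U x, open_set dist U -> U x ->
    exists C, clopen dist C /\ C x /\ subset C U.

Definition perfect {Z : Type} (dist : Z -> Z -> R) : Prop :=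
  forall x eps, 0 < eps -> exists y, y <> x /\ dist x y < eps.

(* A partial map on Z is given by a domain D and a function f (values of f
   outside D are irrelevant). *)
Definition image {Z : Type} (f : Z -> Z) (U : Z -> Prop) : Z -> Prop :=
  fun w => exists z, U z /\ f z = w.

Definition partial_cont_open_clopen {Z : Type} (dist : Z -> Z -> R)
    (D : Z -> Prop) (f : Z -> Z) : Prop :=
  clopen dist D /\ clopen dist (image f D) /\
  (forall z, D z -> forall eps, 0 < eps -> exists delta, 0 < delta /\
     forall w, D w -> dist z w < delta -> dist (f z) (f w) < eps) /\
  (forall U, open_set dist U -> subset U D -> open_set dist (image f U)).

Definition countable_to_one_on {Z : Type} (f : Z -> Z) (U : Z -> Prop) : Prop :=
  forall y, countable_set (fun z => U z /\ f z = y).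

Definition strongly_complex_situation {Z : Type} (dist : Z -> Z -> R)
    (D : nat -> Z -> Prop) (f : nat -> Z -> Z) : Prop :=
  (exists z : Z, True) /\ polish dist /\ zero_dimensional dist /\ perfect dist /\
  (forall n, partial_cont_open_clopen dist (D n) (f n)) /\
  (* Delta(Z) is contained in the closure (in Z x Z) of the union of graphs *)
  (forall z eps, 0 < eps -> exists n w, D n w /\ dist z w < eps /\ dist z (f n w) < eps) /\
  (forall n z, D n z -> f n z <> z) /\
  (forall n U, open_set dist U -> subset U (D n) -> nonempty U ->
     ~ countable_to_one_on (f n) U).

Definition symA {X : Type} (A : X -> X -> Prop) (x y : X) : Prop := A x y \/ A y x.

Fixpoint chain {X : Type} (R : X -> X -> Prop) (x0 : X) (l : list X) : Prop :=
  match l with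
  | nil => True
  | x1 :: l' => R x0 x1 /\ chain R x1 l'
  end.

Definition finite_type (X : Type) : Prop := exists l : list X, forall x, In x l.

Definition uogas {X : Type} (A : X -> X -> Prop) : Prop :=
  (forall x, ~ A x x) /\ (forall x y, A x y -> ~ A y x) /\
  (forall x y y', A x y -> A x y' -> y = y') /\
  (forall x0 l, NoDup (x0 :: l) -> (2 <= length l)%nat -> chain (symA A) x0 l ->
     ~ symA A (last l x0) x0).

Definition mapping_tuple {X Z : Type} (A : X -> X -> Prop) (dist : Z -> Z -> R)
    (D : nat -> Z -> Prop) (f : nat -> Z -> Z) : Prop :=
  finite_type X /\ uogas A /\ strongly_complex_situation dist D f.

Definition in_E {X Z : Type} (A : X -> X -> Prop) (dist : Z -> Z -> R)
    (D : nat -> Z -> Prop) (f : nat -> Z -> Z) (u : X -> nat) (V : X -> Z -> Prop) : Prop :=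
  (forall x, open_set dist (V x) /\ nonempty (V x)) /\
  (forall x y, A x y -> subset (V x) (D (u x)) /\
     forall w, V y w <-> image (f (u x)) (V x) w).

Definition in_U {X Z : Type} (A : X -> X -> Prop) (dist : Z -> Z -> R)
    (D : nat -> Z -> Prop) (f : nat -> Z -> Z) (u : X -> nat) (V : X -> Z -> Prop) : Prop :=
  (forall x, open_set dist (V x) /\ nonempty (V x)) /\
  (forall x y, A x y -> subset (V x) (D (u x)) /\
     subset (V y) (image (f (u x)) (V x))).

From Stdlib Require Import Reals List Lra Lia Classical IndefiniteDescription.

Open Scope nat_scope.

(* Since [A] is a finite forest whose edges point towards the roots, every
   object below can be built by recursion along a rank compatible with [A].
   First shrink each [V x] to an open dense [Vs x] all of whose points have
   more than [|X|] preimages in [Vs c] under [f (u c)] for every edge [c -> x]: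
   this is possible because the maps are open, continuous and nowhere
   countable-to-one.  These preimages allow us to choose, starting at the roots,
   pairwise distinct points [p x] in [Vs x] with [f (u x) (p x) = p y] along
   every edge [x -> y].  Starting at the leaves, zero-dimensionality and the
   openness of the maps give clopen sets [K x], small around [p x], with
   [K x ⊆ f (u c) [K c]] for every edge [c -> x].  Finally, starting at the
   roots, [W x = {z ∈ K x | f (u x) z ∈ W y}] is clopen and satisfies
   [W y = f (u x) [W x]] exactly; the separation of the points makes the [W x]
   pairwise disjoint. *)

Lemma list_pigeonhole (T : Type) (L F : list T) :
  NoDup L -> length F < length L -> exists z, In z L /\ ~ In z F.
Proof.
  intros HN Hlt. apply NNPP. intro Hno.
  assert (Hincl : incl L F) by (intros z Hz; apply NNPP; intro; apply Hno; eauto).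
  pose proof (NoDup_incl_length HN Hincl). lia.
Qed.

Section ForwardPaths.
Variables (X : Type) (A : X -> X -> Prop) (g : nat -> X).
Hypothesis HA : uogas A.
Hypothesis g_forward : forall i, A (g i) (g (S i)).

Lemma forward_chain n a : chain (symA A) (g a) (map g (seq (S a) n)).
Proof.
  revert a. induction n as [|n IH]; intro a; simpl; [exact I |].
  split; [left; apply g_forward | apply IH].
Qed.

Lemma forward_path_no_return k : 1 <= k -> forall i, g i <> g (i + k).
Proof.
  destruct HA as [Hirr [Hanti [_ Hcycle]]].
  induction k as [k IH] using (well_founded_induction Wf_nat.lt_wf).
  intros Hk i Hret.
  assert (Hlast : A (g (i + k - 1)) (g i)).
  { pose proof (g_forward (i + k - 1)) as H.
    replace (S (i + k - 1)) with (i + k) in H by lia. rewrite Hret. exact H. }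
  assert (Hinj : forall s t, In s (seq i k) -> In t (seq i k) -> g s = g t -> s = t).
  { intros s t Hs Ht Hst. apply in_seq in Hs, Ht.
    destruct (Nat.lt_total s t) as [Hlt | [Heq | Hlt]]; [exfalso | exact Heq | exfalso].
    - apply (IH (t - s) ltac:(lia) ltac:(lia) s). now replace (s + (t - s)) with t by lia.
    - apply (IH (s - t) ltac:(lia) ltac:(lia) t). now replace (t + (s - t)) with s by lia. }
  destruct (Nat.lt_ge_cases k 3) as [Hsmall | Hlarge].
  - destruct (Nat.eq_dec k 1) as [-> | Hk1].
    + replace (i + 1 - 1) with i in Hlast by lia. exact (Hirr _ Hlast).
    + replace (i + k - 1) with (S i) in Hlast by lia. exact (Hanti _ _ (g_forward i) Hlast).
  - apply (Hcycle (g i) (map g (seq (S i) (k - 1)))).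
    + replace (g i :: map g (seq (S i) (k - 1))) with (map g (seq i k))
        by (destruct k; [lia | simpl; now rewrite Nat.sub_0_r]).
      exact (NoDup_map_NoDup_ForallPairs g Hinj (seq_NoDup k i)).
    + rewrite length_map, length_seq. lia.
    + apply forward_chain.
    + replace (k - 1) with (S (k - 2)) by lia.
      rewrite seq_S, map_app. cbn [map]. rewrite last_last. left.
      now replace (S i + (k - 2)) with (i + k - 1) by lia.
Qed.

Lemma forward_path_injective s t : g s = g t -> s = t.
Proof.
  intro Hst. destruct (Nat.lt_total s t) as [Hlt | [Heq | Hlt]]; [exfalso | exact Heq | exfalso].
  - apply (forward_path_no_return (t - s) ltac:(lia) s). now replace (s + (t - s)) with t by lia.
  - apply (forward_path_no_return (s - t) ltac:(lia) t). now replace (t + (s - t)) with s by lia.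
Qed.

Lemma forward_path_not_finite (l : list X) : ~ (forall x, In x l).
Proof.
  intro Hl.
  assert (Hnodup : NoDup (map g (seq 0 (S (length l))))).
  { apply NoDup_map_NoDup_ForallPairs; [| apply seq_NoDup].
    intros s t _ _. apply forward_path_injective. }
  pose proof (NoDup_incl_length Hnodup (fun z _ => Hl z)) as Hlen.
  rewrite length_map, length_seq in Hlen. lia.
Qed.

End ForwardPaths.

Section Depth.
Variables (X : Type) (A : X -> X -> Prop) (l : list X).
Hypothesis HA : uogas A.
Hypothesis Hl : forall x, In x l.

Inductive depth : X -> nat -> Prop :=
| depth_root x : (forall y, ~ A x y) -> depth x 0
| depth_succ x y n : A x y -> depth y n -> depth x (S n).

Lemma depth_functional x n m : depth x n -> depth x m -> n = m.
Proof.
  destruct HA as [_ [_ [Hfun _]]].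
  intro Hn. revert m. induction Hn as [x Hroot | x y n Hxy Hy IH];
    intros m Hm; inversion Hm as [x' Hroot' | x' y' m' Hxy' Hy']; subst.
  - reflexivity.
  - exfalso. exact (Hroot _ Hxy').
  - exfalso. exact (Hroot' _ Hxy).
  - f_equal. apply IH. now rewrite (Hfun _ _ _ Hxy Hxy').
Qed.

Lemma depth_exists x0 : exists n, depth x0 n.
Proof.
  apply NNPP. intro Hx0.
  set (deep := fun x => ~ exists n, depth x n).
  assert (Hnext : forall x, exists y, deep x -> A x y /\ deep y).
  { intro x. destruct (classic (deep x)) as [Hx | Hx]; [| exists x; contradiction].
    destruct (classic (exists y, A x y)) as [[y Hxy] | Hroot].
    - exists y. intros _. split; [exact Hxy |].
      intros [n Hn]. apply Hx. exists (S n). exact (depth_succ x y n Hxy Hn).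
    - exfalso. apply Hx. exists 0. apply depth_root. intros y Hxy. apply Hroot. eauto. }
  destruct (functional_choice _ Hnext) as [next Hnext'].
  set (g := fun i => Nat.iter i next x0).
  assert (Hdeep : forall i, deep (g i)) by (induction i; [exact Hx0 | apply (Hnext' _ IHi)]).
  apply (forward_path_not_finite X A g HA (fun i => proj1 (Hnext' _ (Hdeep i))) l Hl).
Qed.

Lemma uogas_rank : exists (rank : X -> nat) (N : nat),
  (forall x y, rank x = rank y -> x = y) /\ (forall x, rank x < N) /\
  (forall x y, A x y -> rank y < rank x).
Proof.
  destruct (functional_choice _ depth_exists) as [dep Hdep].
  destruct (functional_choice (fun x n => nth_error l n = Some x)
              (fun x => In_nth_error l x (Hl x))) as [pos Hpos].
  assert (Hpos_lt : forall x, pos x < length l)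
    by (intro x; apply nth_error_Some; rewrite Hpos; discriminate).
  set (rank := fun x => dep x * length l + pos x).
  exists rank, (S (list_max (map rank l))). split; [| split].
  - intros x y Hxy. unfold rank in Hxy.
    assert (Hdep_eq : dep x = dep y).
    { pose proof (Hpos_lt x). pose proof (Hpos_lt y).
      destruct (Nat.lt_total (dep x) (dep y)) as [Hlt | [Heq | Hlt]]; [nia | exact Heq | nia]. }
    assert (Hpos_eq : pos x = pos y) by (rewrite Hdep_eq in Hxy; lia).
    pose proof (Hpos x) as Hx. rewrite Hpos_eq, Hpos in Hx. congruence.
  - intro x. apply Nat.lt_succ_r.
    pose proof (proj1 (list_max_le (map rank l) _) (Nat.le_refl _)) as Hmax.
    rewrite Forall_forall in Hmax. apply Hmax, in_map, Hl.
  - intros x y Hxy. unfold rank.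
    rewrite (depth_functional x _ _ (Hdep x) (depth_succ x y _ Hxy (Hdep y))).
    pose proof (Hpos_lt y). simpl. lia.
Qed.

End Depth.

Section RecursionOnRank.
Variables (X T : Type) (before : X -> X -> Prop) (rank : X -> nat) (N : nat)
  (P : X -> (X -> T) -> T -> Prop).
Hypothesis before_rank : forall c x, before c x -> rank c < rank x.
Hypothesis rank_bounded : forall x, rank x < N.
Hypothesis T_inhabited : inhabited T.
Hypothesis P_local :
  forall x F F' t, (forall c, before c x -> F c = F' c) -> P x F t -> P x F' t.
Hypothesis P_step :
  forall x F, (forall c, before c x -> P c F (F c)) -> exists t, P x F t.

Lemma family_below_rank k : exists F : X -> T, forall x, rank x < k -> P x F (F x).
Proof.
  induction k as [|k [F HF]].
  - destruct T_inhabited as [t0]. exists (fun _ => t0). intros x Hx. lia.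
  - assert (Hchoice : forall x, exists t, (rank x = k -> P x F t) /\ (rank x <> k -> t = F x)).
    { intro x. destruct (Nat.eq_dec (rank x) k) as [Ek | Nk].
      - destruct (P_step x F) as [t Ht].
        + intros c Hc. apply HF. rewrite <- Ek. exact (before_rank c x Hc).
        + exists t. split; [auto | contradiction].
      - exists (F x). split; [contradiction | reflexivity]. }
    destruct (functional_choice _ Hchoice) as [F' HF'].
    exists F'. intros x Hx. apply P_local with F.
    + intros c Hc. pose proof (before_rank c x Hc). symmetry. apply HF'. lia.
    + destruct (Nat.eq_dec (rank x) k) as [Ek | Nk]; [now apply HF' |].
      rewrite (proj2 (HF' x) Nk). apply HF. lia.
Qed.

Lemma family_by_rank : exists F : X -> T, forall x, P x F (F x).
Proof.
  destruct (family_below_rank N) as [F HF]. exists F. intro x. apply HF, rank_bounded.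
Qed.

End RecursionOnRank.

Lemma list_countable (Z : Type) (S : Z -> Prop) (L : list Z) :
  (forall z, S z -> In z L) -> countable_set S.
Proof.
  intro HS.
  assert (Hindex : forall z, exists n, S z -> nth_error L n = Some z).
  { intro z. destruct (classic (S z)) as [Sz | nSz].
    - destruct (In_nth_error L z (HS z Sz)) as [n Hn]. exists n. auto.
    - exists 0. contradiction. }
  destruct (functional_choice _ Hindex) as [h Hh].
  exists h. intros a b Sa Sb Hab. apply Hh in Sa, Sb. rewrite Hab, Sb in Sa. congruence.
Qed.

Lemma uncountable_distinct_list (Z : Type) (S : Z -> Prop) n :
  ~ countable_set S -> exists L, NoDup L /\ length L = n /\ forall z, In z L -> S z.
Proof.
  intro Hunc. induction n as [|n [L [HN [Hlen HL]]]].
  - exists nil. split; [constructor | split; [reflexivity | intros z []]].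
  - destruct (classic (exists z, S z /\ ~ In z L)) as [[z [Sz Hz]] | Hcover].
    + exists (z :: L). repeat split; [constructor; auto | simpl; auto |].
      intros w [<- | Hw]; auto.
    + exfalso. apply Hunc, (list_countable Z S L).
      intros z Sz. apply NNPP. intro Hz. apply Hcover. eauto.
Qed.

Open Scope R_scope.

Lemma finite_positive_lower_bound (I : Type) (L : list I) (Q : I -> Prop) (g : I -> R) :
  (forall i, In i L -> Q i -> 0 < g i) ->
  exists s, 0 < s /\ forall i, In i L -> Q i -> s <= g i.
Proof.
  induction L as [|a L IH]; intro Hpos.
  - exists 1. split; [lra | intros i []].
  - destruct IH as [s [Hs Hbound]]; [intros i Hi; apply Hpos; right; exact Hi |].
    destruct (classic (Q a)) as [Qa | nQa].
    + assert (Ha : 0 < g a) by (apply Hpos; [left |]; auto).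
      exists (Rmin s (g a)). split; [apply Rmin_glb_lt; auto |].
      intros i [<- | Hi] Qi; [apply Rmin_r |].
      eapply Rle_trans; [apply Rmin_l | auto].
    + exists s. split; [exact Hs |]. intros i [<- | Hi] Qi; [contradiction | auto].
Qed.

Section Metric.
Variables (Z : Type) (dist : Z -> Z -> R).
Hypothesis Hm : is_metric dist.

Lemma dist_self x : dist x x = 0.
Proof. apply (proj1 (proj2 Hm)). reflexivity. Qed.

Lemma dist_sym x y : dist x y = dist y x.
Proof. apply (proj1 (proj2 (proj2 Hm))). Qed.

Lemma dist_triangle x y z : dist x z <= dist x y + dist y z.
Proof. apply (proj2 (proj2 (proj2 Hm))). Qed.

Lemma dist_pos x y : x <> y -> 0 < dist x y.
Proof.
  intro Hxy. destruct Hm as [Hnonneg [Hzero _]].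
  destruct (Hnonneg x y) as [Hlt | Heq]; [exact Hlt |].
  exfalso. apply Hxy, Hzero. auto.
Qed.

Definition continuous_on (Dk : Z -> Prop) (g : Z -> Z) : Prop :=
  forall z, Dk z -> forall eps, 0 < eps -> exists delta, 0 < delta /\
    forall w, Dk w -> dist z w < delta -> dist (g z) (g w) < eps.

Definition open_map_on (Dk : Z -> Prop) (g : Z -> Z) : Prop :=
  forall U, open_set dist U -> subset U Dk -> open_set dist (image g U).

Definition dense_in (G U : Z -> Prop) : Prop :=
  forall z, U z -> forall eps, 0 < eps -> exists z', G z' /\ dist z z' < eps.

Lemma open_ball c r : open_set dist (fun y => dist c y < r).
Proof.
  intros x Hx. exists (r - dist c x). split; [lra |].
  intros y Hy. pose proof (dist_triangle c x y). lra.
Qed.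

Lemma open_outside_ball c r : open_set dist (fun y => r < dist c y).
Proof.
  intros x Hx. exists (dist c x - r). split; [lra |].
  intros y Hy. pose proof (dist_triangle c y x). rewrite (dist_sym y x) in *. lra.
Qed.

Lemma open_and U W :
  open_set dist U -> open_set dist W -> open_set dist (fun z => U z /\ W z).
Proof.
  intros HU HW x [Ux Wx].
  destruct (HU x Ux) as [e1 [He1 H1]], (HW x Wx) as [e2 [He2 H2]].
  exists (Rmin e1 e2). split; [apply Rmin_glb_lt; auto |].
  intros y Hy. split; [apply H1 | apply H2];
    eapply Rlt_le_trans; eauto; [apply Rmin_l | apply Rmin_r].
Qed.

Lemma open_or U W :
  open_set dist U -> open_set dist W -> open_set dist (fun z => U z \/ W z).
Proof.
  intros HU HW x [Ux | Wx];
    [destruct (HU x Ux) as [e [He H]] | destruct (HW x Wx) as [e [He H]]];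
    exists e; split; auto.
Qed.

Lemma open_ext U W : (forall z, U z <-> W z) -> open_set dist U -> open_set dist W.
Proof.
  intros Heq HU x Wx. apply Heq in Wx. destruct (HU x Wx) as [e [He H]].
  exists e. split; [exact He |]. intros y Hy. apply Heq, H, Hy.
Qed.

Lemma clopen_ext U W : (forall z, U z <-> W z) -> clopen dist U -> clopen dist W.
Proof.
  intros Heq [HU HnU]. split; [exact (open_ext U W Heq HU) |].
  apply (open_ext _ _ (fun z => not_iff_compat (Heq z)) HnU).
Qed.

Lemma open_finite_inter (I : Type) (L : list I) (P : I -> Prop) (O : I -> Z -> Prop) :
  (forall i, In i L -> P i -> open_set dist (O i)) ->
  open_set dist (fun z => forall i, In i L -> P i -> O i z).
Proof.
  intros HO z Hz.
  assert (Hradius : forall i, exists e, In i L -> P i ->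
            0 < e /\ forall y, dist z y < e -> O i y).
  { intro i. destruct (classic (In i L /\ P i)) as [[Hi Pi] | Hout].
    - destruct (HO i Hi Pi z (Hz i Hi Pi)) as [e He]. exists e. auto.
    - exists 0. intros Hi Pi. exfalso. auto. }
  destruct (functional_choice _ Hradius) as [e He].
  destruct (finite_positive_lower_bound I L P e) as [s [Hs Hbound]];
    [intros i Hi Pi; apply He; auto |].
  exists s. split; [exact Hs |]. intros y Hy i Hi Pi.
  apply (He i Hi Pi). specialize (Hbound i Hi Pi). lra.
Qed.

Lemma dense_finite_inter (I : Type) (L : list I) (P : I -> Prop) (G : I -> Z -> Prop)
    (U : Z -> Prop) :
  open_set dist U ->
  (forall i, In i L -> P i -> open_set dist (G i) /\ dense_in (G i) U) ->
  dense_in (fun z => U z /\ forall i, In i L -> P i -> G i z) U.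
Proof.
  intro HU. induction L as [|a L IH]; intros HG z Uz eps Heps.
  - exists z. split; [split; [exact Uz | intros i []] | rewrite dist_self; exact Heps].
  - specialize (IH (fun i Hi => HG i (or_intror Hi))).
    destruct (classic (P a)) as [Pa | nPa].
    + destruct (HG a (or_introl eq_refl) Pa) as [Go Gd].
      destruct (HU z Uz) as [e0 [He0 H0]].
      destruct (Gd z Uz (Rmin (eps / 2) e0)) as [z1 [G1 D1]]; [apply Rmin_glb_lt; lra |].
      assert (U1 : U z1) by (apply H0; eapply Rlt_le_trans; [exact D1 | apply Rmin_r]).
      destruct (Go z1 G1) as [e1 [He1 H1]].
      destruct (IH z1 U1 (Rmin (eps / 2) e1)) as [z2 [[U2 G2] D2]];
        [apply Rmin_glb_lt; lra |].
      exists z2. split; [split; [exact U2 |] |].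
      * intros i [<- | Hi] Pi; [| auto].
        apply H1. eapply Rlt_le_trans; [exact D2 | apply Rmin_r].
      * pose proof (dist_triangle z z1 z2).
        pose proof (Rmin_l (eps / 2) e0). pose proof (Rmin_l (eps / 2) e1). lra.
    + destruct (IH z Uz eps Heps) as [z2 [[U2 G2] D2]].
      exists z2. split; [split; [exact U2 |] | exact D2].
      intros i [<- | Hi] Pi; [contradiction | auto].
Qed.

Lemma open_preimage_within (K O : Z -> Prop) (Dk : Z -> Prop) (g : Z -> Z) :
  continuous_on Dk g -> open_set dist K -> subset K Dk -> open_set dist O ->
  open_set dist (fun z => K z /\ O (g z)).
Proof.
  intros Hcont HK HKD HO z [Kz Oz].
  destruct (HK z Kz) as [e1 [He1 H1]], (HO _ Oz) as [e2 [He2 H2]].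
  destruct (Hcont z (HKD z Kz) e2 He2) as [delta [Hdelta Hclose]].
  exists (Rmin e1 delta). split; [apply Rmin_glb_lt; auto |].
  intros w Hw. assert (Kw : K w) by (apply H1; eapply Rlt_le_trans; [exact Hw | apply Rmin_l]).
  split; [exact Kw |]. apply H2, Hclose; [apply HKD, Kw |].
  eapply Rlt_le_trans; [exact Hw | apply Rmin_r].
Qed.

Lemma clopen_preimage_within (K C : Z -> Prop) (Dk : Z -> Prop) (g : Z -> Z) :
  continuous_on Dk g -> clopen dist K -> subset K Dk -> clopen dist C ->
  clopen dist (fun z => K z /\ C (g z)).
Proof.
  intros Hcont [Ko Kc] HKD [Co Cc].
  split; [exact (open_preimage_within K C Dk g Hcont Ko HKD Co) |].
  apply open_ext with (U := fun z => ~ K z \/ (K z /\ ~ C (g z))).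
  - intro z. tauto.
  - apply open_or; [exact Kc | exact (open_preimage_within K _ Dk g Hcont Ko HKD Cc)].
Qed.

Lemma open_avoids_finite (O : Z -> Prop) (F : list Z) :
  perfect dist -> open_set dist O -> nonempty O -> exists z, O z /\ ~ In z F.
Proof.
  intros Hperf HO [c Oc].
  destruct (HO c Oc) as [e [He Hball]].
  destruct (finite_positive_lower_bound Z F (fun z => z <> c) (dist c)) as [s [Hs Hfar]];
    [intros z _ Hz; apply dist_pos; auto |].
  destruct (Hperf c (Rmin e s)) as [y [Hyc Hy]]; [apply Rmin_glb_lt; auto |].
  exists y. split; [apply Hball; eapply Rlt_le_trans; [exact Hy | apply Rmin_l] |].
  intro Hin. specialize (Hfar y Hin Hyc). pose proof (Rmin_r e s). lra.
Qed.

Lemma finite_family_separated (I : Type) (L : list I) (p : I -> Z) :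
  exists s, 0 < s /\ forall i j, In i L -> In j L -> p i <> p j -> s <= dist (p i) (p j).
Proof.
  destruct (finite_positive_lower_bound (I * I) (list_prod L L)
              (fun ij => p (fst ij) <> p (snd ij)) (fun ij => dist (p (fst ij)) (p (snd ij))))
    as [s [Hs Hbound]]; [intros [i j] _ Hij; apply dist_pos, Hij |].
  exists s. split; [exact Hs |]. intros i j Hi Hj Hij.
  apply (Hbound (i, j)); [apply in_prod |]; auto.
Qed.

Definition many_preimages (n : nat) (g : Z -> Z) (U : Z -> Prop) (w : Z) : Prop :=
  exists L, NoDup L /\ length L = n /\ forall z, In z L -> U z /\ g z = w.

Section ManyPreimages.
Variables (Dk : Z -> Prop) (g : Z -> Z).
Hypothesis g_cont : continuous_on Dk g.
Hypothesis g_open : open_map_on Dk g.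
Hypothesis g_uncountable : forall U, open_set dist U -> subset U Dk -> nonempty U ->
  ~ countable_to_one_on g U.

(* Distinct preimages can be separated by disjoint open sets, whose images are
   neighbourhoods of [w]. *)
Lemma many_preimages_nbhd (w : Z) (L : list Z) : NoDup L ->
  forall U, open_set dist U -> subset U Dk -> (forall z, In z L -> U z /\ g z = w) ->
  exists eps, 0 < eps /\ forall w', dist w w' < eps -> many_preimages (length L) g U w'.
Proof.
  induction L as [|a L IH]; intros HN U HU HUD HL.
  - exists 1. split; [lra |]. intros w' _.
    exists nil. split; [constructor | split; [reflexivity | intros z []]].
  - apply NoDup_cons_iff in HN as [Ha HN].
    destruct (finite_positive_lower_bound Z L (fun _ => True) (dist a)) as [s [Hs Hsep]];
      [intros z Hz _; apply dist_pos; intros ->; contradiction |].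
    destruct (IH HN (fun z => U z /\ s / 2 < dist a z)) as [e0 [He0 Hfar]].
    + apply open_and; [exact HU | apply open_outside_ball].
    + intros z [Uz _]. apply HUD, Uz.
    + intros z Hz. destruct (HL z (or_intror Hz)) as [Uz gz].
      specialize (Hsep z Hz I). repeat split; auto. lra.
    + destruct (HL a (or_introl eq_refl)) as [Ua ga].
      destruct (g_open (fun z => U z /\ dist a z < s / 2)) with (x := w) as [e1 [He1 Hnear]].
      * apply open_and; [exact HU | apply open_ball].
      * intros z [Uz _]. apply HUD, Uz.
      * exists a. rewrite dist_self. repeat split; auto. lra.
      * exists (Rmin e0 e1). split; [apply Rmin_glb_lt; auto |]. intros w' Hw'.
        destruct (Hfar w') as [L' [HN' [Hlen' HL']]];
          [eapply Rlt_le_trans; [exact Hw' | apply Rmin_l] |].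
        destruct (Hnear w') as [a' [[Ua' Ha'] ga']];
          [eapply Rlt_le_trans; [exact Hw' | apply Rmin_r] |].
        exists (a' :: L'). split; [| split; [simpl; congruence |]].
        -- constructor; [| exact HN']. intro Hin. destruct (HL' a' Hin) as [[_ Hfar'] _]. lra.
        -- intros z [<- | Hz]; [auto |]. destruct (HL' z Hz) as [[Uz _] gz]. auto.
Qed.

Lemma many_preimages_open n U :
  open_set dist U -> subset U Dk -> open_set dist (many_preimages n g U).
Proof.
  intros HU HUD w [L [HN [<- HL]]].
  exact (many_preimages_nbhd w L HN U HU HUD HL).
Qed.

Lemma many_preimages_near n U z eps : open_set dist U -> subset U Dk -> U z -> 0 < eps ->
  exists w, many_preimages n g U w /\ dist (g z) w < eps.
Proof.
  intros HU HUD Uz Heps.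
  destruct (g_cont z (HUD z Uz) eps Heps) as [delta [Hdelta Hclose]].
  assert (Hball : ~ countable_to_one_on g (fun y => U y /\ dist z y < delta)).
  { apply g_uncountable.
    - apply open_and; [exact HU | apply open_ball].
    - intros y [Uy _]. apply HUD, Uy.
    - exists z. rewrite dist_self. auto. }
  apply not_all_ex_not in Hball as [w Hw].
  destruct (uncountable_distinct_list Z _ n Hw) as [L [HN [Hlen HL]]].
  assert (Hfiber : exists t, (U t /\ dist z t < delta) /\ g t = w).
  { apply NNPP. intro Hempty. apply Hw, (list_countable Z _ nil).
    intros t Ht. exfalso. eauto. }
  destruct Hfiber as [t [[Ut Ht] <-]].
  exists (g t). split.
  - exists L. repeat split; auto; apply HL; auto.
  - apply Hclose; [apply HUD, Ut | exact Ht].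
Qed.

End ManyPreimages.

Section Construction.
Variables (X : Type) (A : X -> X -> Prop) (D : nat -> Z -> Prop) (f : nat -> Z -> Z)
  (u : X -> nat) (V : X -> Z -> Prop) (l : list X) (rank : X -> nat) (N : nat).
Hypothesis Hl : forall x, In x l.
Hypothesis A_functional : forall x y y', A x y -> A x y' -> y = y'.
Hypothesis rank_injective : forall x y, rank x = rank y -> x = y.
Hypothesis rank_bounded : forall x, (rank x < N)%nat.
Hypothesis rank_succ : forall x y, A x y -> (rank y < rank x)%nat.
Hypothesis Z_inhabited : inhabited Z.
Hypothesis Hzd : zero_dimensional dist.
Hypothesis Hperf : perfect dist.
Hypothesis f_cont : forall n, continuous_on (D n) (f n).
Hypothesis f_open : forall n, open_map_on (D n) (f n).
Hypothesis f_uncountable : forall n U, open_set dist U -> subset U (D n) -> nonempty U ->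
  ~ countable_to_one_on (f n) U.
Hypothesis V_open : forall x, open_set dist (V x) /\ nonempty (V x).
Hypothesis V_succ : forall x y, A x y ->
  subset (V x) (D (u x)) /\ subset (V y) (image (f (u x)) (V x)).

Lemma corank_pred c x : A c x -> (N - rank c < N - rank x)%nat.
Proof. intro Hcx. specialize (rank_succ c x Hcx). specialize (rank_bounded c). lia. Qed.

(* One more preimage than there are points, so that a point avoiding all
   previously chosen ones can always be picked. *)
Definition M : nat := S (length l).

Definition rich_at (x : X) (F : X -> Z -> Prop) (t : Z -> Prop) : Prop :=
  open_set dist t /\ subset t (V x) /\ dense_in t (V x) /\
  forall c, A c x -> subset t (many_preimages M (f (u c)) (F c)).

Lemma rich_at_local x F F' t : (forall c, A c x -> F c = F' c) -> rich_at x F t -> rich_at x F' t.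
Proof.
  intros Hagree [Ho [Hs [Hd Hrich]]].
  do 3 (split; [assumption |]). intros c Hc. rewrite <- (Hagree c Hc). exact (Hrich c Hc).
Qed.

Lemma many_preimages_dense_in_succ c x (Vc : Z -> Prop) : A c x ->
  open_set dist Vc -> subset Vc (V c) -> dense_in Vc (V c) ->
  dense_in (many_preimages M (f (u c)) Vc) (V x).
Proof.
  intros Hcx Ho Hs Hd w Vw eps Heps.
  destruct (V_succ c x Hcx) as [HVD Himg].
  destruct (Himg w Vw) as [z [Vz <-]].
  destruct (f_cont (u c) z (HVD z Vz) (eps / 2)) as [delta [Hdelta Hclose]]; [lra |].
  destruct (Hd z Vz delta Hdelta) as [z' [Vz' Hz']].
  pose proof (Hclose z' (HVD z' (Hs z' Vz')) Hz') as Himage_close.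
  destruct (many_preimages_near (D (u c)) (f (u c)) (f_cont (u c)) (f_uncountable (u c))
              M Vc z' (eps / 2) Ho (fun t Ht => HVD t (Hs t Ht)) Vz') as [w' [Hrich Hw']];
    [lra |].
  exists w'. split; [exact Hrich |].
  pose proof (dist_triangle (f (u c) z) (f (u c) z') w'). lra.
Qed.

Lemma rich_at_exists x F : (forall c, A c x -> rich_at c F (F c)) -> exists t, rich_at x F t.
Proof.
  intro Hpred.
  assert (Hrich_open : forall c, A c x -> open_set dist (many_preimages M (f (u c)) (F c))).
  { intros c Hcx. destruct (Hpred c Hcx) as [Ho [Hs _]].
    apply (many_preimages_open (D (u c)) (f (u c)) (f_open (u c))); [exact Ho |].
    intros z Fz. apply (V_succ c x Hcx), Hs, Fz. }
  exists (fun w => V x w /\ forall c, In c l -> A c x -> many_preimages M (f (u c)) (F c) w).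
  split; [| split; [| split]].
  - apply open_and; [apply V_open |]. apply open_finite_inter. intros c _. apply Hrich_open.
  - intros w [Vw _]. exact Vw.
  - apply dense_finite_inter; [apply V_open |]. intros c _ Hcx.
    destruct (Hpred c Hcx) as [Ho [Hs [Hd _]]].
    exact (conj (Hrich_open c Hcx) (many_preimages_dense_in_succ c x (F c) Hcx Ho Hs Hd)).
  - intros c Hcx w [_ Hw]. apply Hw; auto.
Qed.

Lemma rich_subsets : exists Vs : X -> Z -> Prop, forall x, rich_at x Vs (Vs x).
Proof.
  destruct (family_by_rank X (Z -> Prop) A (fun x => N - rank x)%nat (S N) rich_at)
    as [Vs HVs]; [exact corank_pred | intro; lia | exact (inhabits (fun _ => True))
                  | exact rich_at_local | exact rich_at_exists | exists Vs; exact HVs].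
Qed.

Section Points.
Variable Vs : X -> Z -> Prop.
Hypothesis Vs_rich : forall x, rich_at x Vs (Vs x).

Definition point_at (x : X) (p : X -> Z) (z : Z) : Prop :=
  Vs x z /\ (forall y, A x y -> f (u x) z = p y) /\
  (forall y, (rank y < rank x)%nat -> z <> p y).

Lemma point_at_exists x p : (forall y, (rank y < rank x)%nat -> point_at y p (p y)) ->
  exists z, point_at x p z.
Proof.
  intro Hbefore.
  assert (Havoid : forall z, ~ In z (map p l) -> forall y, (rank y < rank x)%nat -> z <> p y)
    by (intros z Hz y _ ->; apply Hz, in_map, Hl).
  destruct (classic (exists y, A x y)) as [[y Hxy] | Hroot].
  - destruct (Hbefore y (rank_succ x y Hxy)) as [Vy _].
    destruct (proj2 (proj2 (proj2 (Vs_rich y))) x Hxy (p y) Vy) as [L [HN [Hlen HL]]].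
    destruct (list_pigeonhole Z L (map p l) HN) as [z [Hz Hnz]];
      [rewrite length_map, Hlen; unfold M; lia |].
    destruct (HL z Hz) as [Vz fz].
    exists z. split; [exact Vz | split; [| exact (Havoid z Hnz)]].
    intros y' Hxy'. rewrite <- (A_functional x y y' Hxy Hxy'). exact fz.
  - destruct (Vs_rich x) as [Ho [_ [Hd _]]].
    destruct (V_open x) as [_ [w Vw]].
    destruct (Hd w Vw 1 Rlt_0_1) as [z1 [Vz1 _]].
    destruct (open_avoids_finite (Vs x) (map p l) Hperf Ho (ex_intro _ z1 Vz1)) as [z [Vz Hnz]].
    exists z. split; [exact Vz | split; [| exact (Havoid z Hnz)]].
    intros y Hxy. exfalso. eauto.
Qed.

Lemma injective_points : exists p : X -> Z, forall x, Vs x (p x) /\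
  (forall y, A x y -> f (u x) (p x) = p y) /\ (forall y, x <> y -> p x <> p y).
Proof.
  destruct (family_by_rank X Z (fun y x => rank y < rank x)%nat rank N point_at) as [p Hp];
    [auto | exact rank_bounded | exact Z_inhabited | | exact point_at_exists |].
  { intros x F F' t Hagree [Vt [Hsucc Havoid]]. split; [exact Vt | split].
    - intros y Hxy. rewrite <- Hagree; auto.
    - intros y Hy. rewrite <- Hagree; auto. }
  exists p. intro x. destruct (Hp x) as [Vx [Hsucc _]]. split; [exact Vx | split; [exact Hsucc |]].
  intros y Hxy Heq.
  destruct (Nat.lt_total (rank x) (rank y)) as [Hlt | [Hrank | Hlt]].
  - exact (proj2 (proj2 (Hp y)) x Hlt (eq_sym Heq)).
  - exact (Hxy (rank_injective x y Hrank)).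
  - exact (proj2 (proj2 (Hp x)) y Hlt Heq).
Qed.

End Points.

Section Neighbourhoods.
Variables (p : X -> Z) (r : R).
Hypothesis p_in_V : forall x, V x (p x).
Hypothesis p_succ : forall x y, A x y -> f (u x) (p x) = p y.
Hypothesis r_pos : 0 < r.

Definition nbhd_at (x : X) (K : X -> Z -> Prop) (t : Z -> Prop) : Prop :=
  clopen dist t /\ t (p x) /\ subset t (V x) /\ (forall z, t z -> dist (p x) z < r) /\
  forall c, A c x -> subset t (image (f (u c)) (K c)).

Lemma nbhd_at_exists x K : (forall c, A c x -> nbhd_at c K (K c)) -> exists t, nbhd_at x K t.
Proof.
  intro Hpred.
  set (O := fun w => V x w /\ dist (p x) w < r /\
                     forall c, In c l -> A c x -> image (f (u c)) (K c) w).
  assert (HO : open_set dist O).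
  { apply open_and; [apply V_open | apply open_and; [apply open_ball | apply open_finite_inter]].
    intros c _ Hcx. destruct (Hpred c Hcx) as [[Ko _] [_ [KV _]]].
    apply f_open; [exact Ko |]. intros z Kz. apply (V_succ c x Hcx), KV, Kz. }
  assert (Hpx : O (p x)).
  { split; [apply p_in_V | split; [rewrite dist_self; exact r_pos |]].
    intros c _ Hcx. exists (p c). split; [apply (Hpred c Hcx) | apply p_succ, Hcx]. }
  destruct (Hzd O (p x) HO Hpx) as [C [HC [Cp CO]]].
  exists C. split; [exact HC | split; [exact Cp | split; [| split]]].
  - intros z Cz. exact (proj1 (CO z Cz)).
  - intros z Cz. exact (proj1 (proj2 (CO z Cz))).
  - intros c Hcx z Cz. exact (proj2 (proj2 (CO z Cz)) c (Hl c) Hcx).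
Qed.

Lemma clopen_neighbourhoods : exists K : X -> Z -> Prop, forall x, nbhd_at x K (K x).
Proof.
  destruct (family_by_rank X (Z -> Prop) A (fun x => N - rank x)%nat (S N) nbhd_at)
    as [K HK]; [exact corank_pred | intro; lia | exact (inhabits (fun _ => True))
                | | exact nbhd_at_exists | exists K; exact HK].
  intros x F F' t Hagree [Hc [Hp [HV [Hr Himg]]]].
  do 4 (split; [assumption |]). intros c Hcx. rewrite <- (Hagree c Hcx). exact (Himg c Hcx).
Qed.

Section Shrinking.
Variable K : X -> Z -> Prop.
Hypothesis K_nbhd : forall x, nbhd_at x K (K x).

Definition shrunk_at (x : X) (W : X -> Z -> Prop) (t : Z -> Prop) : Prop :=
  (forall z, t z <-> K x z /\ forall y, A x y -> W y (f (u x) z)) /\ clopen dist t /\ t (p x).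

Lemma shrunk_at_exists x W : (forall y, A x y -> shrunk_at y W (W y)) -> exists t, shrunk_at x W t.
Proof.
  intro Hsucc. destruct (K_nbhd x) as [Kc [Kp [KV _]]].
  exists (fun z => K x z /\ forall y, A x y -> W y (f (u x) z)).
  split; [reflexivity | split].
  - destruct (classic (exists y, A x y)) as [[y Hxy] | Hroot].
    + apply clopen_ext with (U := fun z => K x z /\ W y (f (u x) z)).
      * intro z. split; intros [Kz Hz]; split; auto.
        intros y' Hxy'. now rewrite <- (A_functional x y y' Hxy Hxy').
      * apply (clopen_preimage_within _ _ (D (u x)) _ (f_cont (u x)) Kc);
          [intros z Kz; apply (V_succ x y Hxy), KV, Kz | apply (Hsucc y Hxy)].
    + apply clopen_ext with (U := K x); [| exact Kc].
      intro z. split; [intro Kz; split; [exact Kz | intros y Hxy; exfalso; eauto] | tauto].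
  - split; [exact Kp |]. intros y Hxy. rewrite (p_succ x y Hxy). apply (Hsucc y Hxy).
Qed.

Lemma shrunk_family : exists W : X -> Z -> Prop, forall x, shrunk_at x W (W x).
Proof.
  destruct (family_by_rank X (Z -> Prop) (fun y x => A x y) rank N shrunk_at) as [W HW];
    [exact (fun y x => rank_succ x y) | exact rank_bounded | exact (inhabits (fun _ => True))
     | | exact shrunk_at_exists | exists W; exact HW].
  intros x F F' t Hagree [Ht Htp]. split; [| exact Htp].
  intro z. rewrite Ht. split; intros [Kz Hz]; split; auto; intros y Hxy;
    [rewrite <- Hagree | rewrite Hagree]; auto.
Qed.

Lemma shrunk_family_properties (W : X -> Z -> Prop) :
  (forall x, shrunk_at x W (W x)) ->
  (forall x y, x <> y -> 2 * r <= dist (p x) (p y)) ->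
  in_E A dist D f u W /\
  (forall x, subset (W x) (V x) /\ clopen dist (W x) /\ diam_le dist (W x) (2 * r)) /\
  (forall x y, x <> y -> forall z, W x z -> W y z -> False).
Proof.
  intros HW Hsep.
  assert (HWK : forall x z, W x z -> K x z) by (intros x z Wz; apply (proj1 (HW x)), Wz).
  assert (Hclose : forall x z, W x z -> dist (p x) z < r)
    by (intros x z Wz; apply (K_nbhd x), HWK, Wz).
  split; [split | split].
  - intro x. destruct (HW x) as [_ [[Wo _] Wp]]. split; [exact Wo | exists (p x); exact Wp].
  - intros x y Hxy. split; [intros z Wz; apply (V_succ x y Hxy), (K_nbhd x), HWK, Wz |].
    intro w. split.
    + intro Wy. destruct (proj2 (proj2 (proj2 (proj2 (K_nbhd y)))) x Hxy w (HWK y w Wy))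
        as [z [Kz <-]].
      exists z. split; [| reflexivity]. apply (proj1 (HW x)). split; [exact Kz |].
      intros y' Hxy'. now rewrite <- (A_functional x y y' Hxy Hxy').
    + intros [z [Wz <-]]. apply (proj1 (HW x)) in Wz. apply (proj2 Wz), Hxy.
  - intro x. split; [| split; [apply (HW x) |]].
    + intros z Wz. apply (K_nbhd x), HWK, Wz.
    + intros a b Wa Wb. pose proof (Hclose x a Wa). pose proof (Hclose x b Wb).
      pose proof (dist_triangle a (p x) b). rewrite (dist_sym a (p x)) in *. lra.
  - intros x y Hxy z Wx Wy. pose proof (Hclose x z Wx). pose proof (Hclose y z Wy).
    pose proof (dist_triangle (p x) z (p y)). rewrite (dist_sym z (p y)) in *.
    pose proof (Hsep x y Hxy). lra.
Qed.

End Shrinking.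
End Neighbourhoods.

Lemma small_clopen_shrinking (b : R) : 0 < b -> exists W : X -> Z -> Prop,
  in_E A dist D f u W /\
  (forall x, subset (W x) (V x) /\ clopen dist (W x) /\ diam_le dist (W x) b) /\
  (forall x y, x <> y -> forall z, W x z -> W y z -> False).
Proof.
  intro Hb.
  destruct rich_subsets as [Vs HVs].
  destruct (injective_points Vs HVs) as [p Hp].
  destruct (finite_family_separated X l p) as [s [Hs Hsep]].
  set (r := Rmin (s / 2) (b / 2)).
  assert (Hr : 0 < r) by (apply Rmin_glb_lt; lra).
  assert (HpV : forall x, V x (p x)) by (intro x; apply (HVs x), (Hp x)).
  assert (Hpsucc : forall x y, A x y -> f (u x) (p x) = p y) by (intro x; apply (Hp x)).
  destruct (clopen_neighbourhoods p r HpV Hpsucc Hr) as [K HK].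
  destruct (shrunk_family p r Hpsucc K HK) as [W HW].
  destruct (shrunk_family_properties p r K HK W HW) as [HE [Hsmall Hdisj]].
  - intros x y Hxy. pose proof (Hsep x y (Hl x) (Hl y) (proj2 (proj2 (Hp x)) y Hxy)).
    pose proof (Rmin_l (s / 2) (b / 2)). unfold r. lra.
  - exists W. split; [exact HE | split; [| exact Hdisj]].
    intro x. destruct (Hsmall x) as [HV [Hc Hdiam]]. split; [exact HV | split; [exact Hc |]].
    intros a a' Wa Wa'. pose proof (Hdiam a a' Wa Wa'). pose proof (Rmin_r (s / 2) (b / 2)).
    unfold r in *. lra.
Qed.

End Construction.
End Metric.

Theorem lemma4p7 (X : Type) (A : X -> X -> Prop) (Z : Type) (dist : Z -> Z -> R)
    (D : nat -> Z -> Prop) (f : nat -> Z -> Z)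
    (HT : mapping_tuple A dist D f)
    (d : nat) (u : X -> nat) (V : X -> Z -> Prop)
    (HU : in_U A dist D f u V) :
  exists W : X -> Z -> Prop,
    in_E A dist D f u W /\
    (forall x, subset (W x) (V x) /\ clopen dist (W x) /\ diam_le dist (W x) ((/ 2) ^ d)) /\
    (forall x y, x <> y -> forall z, W x z -> W y z -> False).
Proof.
  destruct HT as [[l Hl] [HA [[z0 _] [[Hm _] [Hzd [Hperf [Hpc [_ [_ Huncountable]]]]]]]]].
  destruct HU as [HVo HVe].
  destruct (uogas_rank X A l HA Hl) as [rank [N [Hinj [Hbound Hsucc]]]].
  apply (small_clopen_shrinking Z dist Hm X A D f u V l rank N Hl
           (proj1 (proj2 (proj2 HA))) Hinj Hbound Hsucc (inhabits z0) Hzd Hperf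
           (fun n => proj1 (proj2 (proj2 (Hpc n)))) (fun n => proj2 (proj2 (proj2 (Hpc n))))
           Huncountable HVo HVe).
  apply pow_lt. lra.
Qed.
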